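(* Let $T$ be a DAT with duration vector $d$, and let $\mathcal{O}\in\mathcal{S}_T$ be a successful attack. Then there exists an exact time assignment $f$ with $f_{\mathrm{R}_T}\le\mathrm{t}(\mathcal{O},d)$.
   Context: A dynamic attack tree (DAT) is a finite rooted directed acyclic graph $T=(N,E)$ (edges point from a node to its children) with root $\mathrm{R}_T$, in which each node $v$ has a type $\gamma(v)\in\{\mathtt{BAS},\mathtt{OR},\mathtt{AND},\mathtt{SAND}\}$, with $\gamma(v)=\mathtt{BAS}$ if and only if $v$ is a leaf. Every node of type $\mathtt{SAND}$ comes with a fixed linear ordering $v_1,\dots,v_n$ of its children, written $v=\mathtt{SAND}(v_1,\dots,v_n)$; similarly one writes $v=\mathtt{OR}(v_1,\dots,v_n)$, $v=\mathtt{AND}(v_1,\dots,v_n)$. $N_\gamma$ denotes the set of nodes of type $\gamma$. For a node $v$, $B_v$ is the set of nodes of type $\mathtt{BAS}$ that are descendants of $v$ (reachable from $v$ by a directed path, including $v$ itself). An attack on $T$ is a pair $\mathcal{O}=(A,\prec)$ where $A\subseteq N_{\mathtt{BAS}}$ and $\prec$ is a strict partial order on $A$. An attack $(A,\prec)$ reaches a node $v$, defined recursively: if $v\in N_{\mathtt{BAS}}$, iff $v\in A$; if $v=\mathtt{OR}(v_1,\dots,v_n)$, iff it reaches some $v_i$; if $v=\mathtt{AND}(v_1,\dots,v_n)$, iff it reaches all $v_i$; if $v=\mathtt{SAND}(v_1,\dots,v_n)$, iff it reaches all $v_i$ and for every $i<n$, every $a\in A\cap B_{v_i}$ and every $a'\in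 A\cap B_{v_{i+1}}$ one has $a\prec a'$. An attack is successful if it reaches $\mathrm{R}_T$; $\mathcal{S}_T$ is the set of successful attacks. A duration vector is $d\in\mathbb{R}_{\ge0}^{N_{\mathtt{BAS}}}$. For an attack $\mathcal{O}=(A,\prec)$, $\mathrm{t}(\mathcal{O},d)=\max_C\sum_{a\in C}d_a$, the maximum over all maximal chains $C$ of $(A,\prec)$ (equal to $0$ if $A=\varnothing$). Time assignments: for a node $v$ with ordered children $v_1,\dots,v_n$ and $i<n$, let $Z^v_i=B_{v_i}\times B_{v_{i+1}}$. A time assignment is a vector $f\in[0,\infty]^N$ such that: (1) $f_a\ge d_a$ for every $a\in N_{\mathtt{BAS}}$; (2) $f_v\ge\min_i f_{v_i}$ for every $v=\mathtt{OR}(v_1,\dots,v_n)$; (3) $f_v\ge\max_i f_{v_i}$ for every $v=\mathtt{AND}(v_1,\dots,v_n)$; (4) for every $v=\mathtt{SAND}(v_1,\dots,v_n)$: (a) $f_v\ge f_{v_n}$; (b) if $f_{v_i}=\infty$ for some $i\le n$ then $f_v=\infty$; (c) if there exist $i<n$ and $(a,a')\in Z^v_i$ with $f_{a'}-d_{a'}<f_a<\infty$, then $f_v=\infty$. A time assignment is exact if equality holds in (2) and (3) for all OR- and AND-nodes, and for every SAND-node $v$ for which neither the premise of (4b) nor the premise of (4c) holds, one has $f_v=f_{v_n}$. *)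

From HB Require Import structures.
From mathcomp Require Import all_boot all_order all_algebra.
From mathcomp Require Import reals constructive_ereal.
Set Implicit Arguments. Unset Strict Implicit. Unset Printing Implicit Defensive.
Import Order.TTheory GRing.Theory Num.Theory.

Inductive ntype := BAS | OR | AND | SAND.
Definition ntype_eqb (x y : ntype) : bool :=
  match x, y with
  | BAS, BAS | OR, OR | AND, AND | SAND, SAND => true | _, _ => false end.
Lemma ntype_eqP : Equality.axiom ntype_eqb.
Proof. by case; case; constructor. Qed.
HB.instance Definition _ := hasDecEq.Build ntype ntype_eqP.

(* A DAT on the finite node set N: ordered list of children of each node
   (the edges point from a node to its children), node types, and root. *)
Record dat (N : finType) := Dat {
  children : N -> seq N;
  ntyp : N -> ntype;
  droot : N }.

Section DAT.
Variables (N : finType) (T : dat N).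

Definition edge : rel N := fun u v => v \in children T u.

Definition wf_dat : Prop :=
  [/\ forall v, uniq (children T v),
      forall u v, edge u v -> ~~ connect edge v u,
      forall v, connect edge (droot T) v
    & forall v, (ntyp T v == BAS) = (children T v == [::])].

Definition Bset (v : N) : {set N} :=
  [set a | connect edge v a & ntyp T a == BAS].

Definition attack (A : {set N}) (prec : rel N) : Prop :=
  [/\ forall a, a \in A -> ntyp T a = BAS,
      forall a b, prec a b -> (a \in A) && (b \in A),
      forall a, a \in A -> ~~ prec a a
    & forall a b c, a \in A -> b \in A -> c \in A ->
        prec a b -> prec b c -> prec a c].

Definition sand_ok (A : {set N}) (prec : rel N) (v : N) : Prop :=
  forall i, i.+1 < size (children T v) ->
    forall a a', a \in A -> a' \in A ->
      a \in Bset (nth v (children T v) i) ->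
      a' \in Bset (nth v (children T v) i.+1) -> prec a a'.

(* "the attack (A, prec) reaches v", defined recursively (inductively,
   which on a DAG is the same as the recursive definition). *)
Inductive reaches (A : {set N}) (prec : rel N) : N -> Prop :=
| reach_BAS v : ntyp T v = BAS -> v \in A -> reaches A prec v
| reach_OR v c : ntyp T v = OR -> c \in children T v -> reaches A prec c ->
    reaches A prec v
| reach_AND v : ntyp T v = AND ->
    (forall c, c \in children T v -> reaches A prec c) -> reaches A prec v
| reach_SAND v : ntyp T v = SAND ->
    (forall c, c \in children T v -> reaches A prec c) ->
    sand_ok A prec v -> reaches A prec v.

Definition successful (A : {set N}) (prec : rel N) : Prop :=
  reaches A prec (droot T).

Variable R : realType.

Definition is_chain (A : {set N}) (prec : rel N) (C : {set N}) : bool :=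
  (C \subset A) &&
  [forall a in C, forall b in C, (a == b) || prec a b || prec b a].

Definition is_max_chain (A : {set N}) (prec : rel N) (C : {set N}) : bool :=
  is_chain A prec C &&
  [forall D : {set N}, (C \proper D) ==> ~~ is_chain A prec D].

(* t(O, d) : maximum over maximal chains of the total duration (0 if A empty,
   in which case the only maximal chain is empty) *)
Definition attack_time (A : {set N}) (prec : rel N) (d : N -> R) : R :=
  (\big[Num.max/0]_(C : {set N} | is_max_chain A prec C) \sum_(a in C) d a)%R.

Local Open Scope ereal_scope.

Definition Zpair (v : N) (i : nat) (a a' : N) : bool :=
  (a \in Bset (nth v (children T v) i)) &&
  (a' \in Bset (nth v (children T v) i.+1)).

Definition sand_prem_b (f : N -> \bar R) (v : N) : Prop :=
  exists2 c, c \in children T v & f c = +oo.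

Definition sand_prem_c (d : N -> R) (f : N -> \bar R) (v : N) : Prop :=
  exists i, exists a, exists a',
    [/\ (i.+1 < size (children T v))%N, Zpair v i a a',
        f a' - (d a')%:E < f a & f a < +oo].

Definition last_child (v : N) : N := last v (children T v).

Definition time_assignment (d : N -> R) (f : N -> \bar R) : Prop :=
  [/\ forall v, 0 <= f v,
      forall a, ntyp T a = BAS -> (d a)%:E <= f a,
      forall v, ntyp T v = OR ->
        \big[Order.min/+oo]_(c <- children T v) f c <= f v,
      forall v, ntyp T v = AND ->
        \big[Order.max/-oo]_(c <- children T v) f c <= f v
    & forall v, ntyp T v = SAND ->
        [/\ f (last_child v) <= f v,
            sand_prem_b f v -> f v = +oo
          & sand_prem_c d f v -> f v = +oo]].

Definition exact_ta (d : N -> R) (f : N -> \bar R) : Prop :=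
  [/\ forall v, ntyp T v = OR ->
        f v = \big[Order.min/+oo]_(c <- children T v) f c,
      forall v, ntyp T v = AND ->
        f v = \big[Order.max/-oo]_(c <- children T v) f c
    & forall v, ntyp T v = SAND ->
        ~ sand_prem_b f v -> ~ sand_prem_c d f v -> f v = f (last_child v)].

End DAT.

From HB Require Import structures.
From mathcomp Require Import all_boot all_order all_algebra.
From mathcomp Require Import reals constructive_ereal boolp.
Import Order.TTheory GRing.Theory Num.Theory.
Set Implicit Arguments. Unset Strict Implicit. Unset Printing Implicit Defensive.

(* Give every BAS node a "base" value: if a is attacked, its
   earliest finish time etime a, the largest total duration of a chain of
   (A, prec) ending in a; otherwise +oo.  Then define f as the fixpoint of
   the operator that keeps the base values on leaves and computes every inner
   node exactly (min for OR, max for AND, the last child or +oo for SAND).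
   Since T is a finite DAG, #|N| iterations from the base reach this fixpoint. *)

Section DagInduction.
Variables (N : finType) (T : dat N).

(* The number of descendants of v (v included); it decreases along edges. *)
Definition ndesc (v : N) : nat := #|[set w | connect (edge T) v w]|.

Lemma ndesc_pos v : (0 < ndesc v)%N.
Proof. by apply/card_gt0P; exists v; rewrite inE connect0. Qed.

Lemma ndesc_le_card v : (ndesc v <= #|N|)%N.
Proof. exact: max_card. Qed.

Hypothesis HT : wf_dat T.

(* Acyclicity: u is a descendant of itself but not of its child v. *)
Lemma ndesc_child u v : v \in children T u -> (ndesc v < ndesc u)%N.
Proof.
move=> uv; case: HT => _ acyclic _ _.
apply/proper_card/properP; split.
  apply/subsetP => w; rewrite !inE; apply: connect_trans.
  exact: connect1.
by exists u; rewrite inE ?connect0 //; apply: acyclic.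
Qed.

Lemma dat_ind (P : N -> Prop) :
  (forall v, (forall c, c \in children T v -> P c) -> P v) -> forall v, P v.
Proof.
move=> IH v; suff: forall n w, (ndesc w < n)%N -> P w by apply; exact: ltnSn.
elim=> [|n IHn] w //; rewrite ltnS => wn.
by apply: IH => c /ndesc_child cw; apply: IHn; apply: leq_trans wn.
Qed.

Lemma last_child_in v : ntyp T v <> BAS -> last_child T v \in children T v.
Proof.
case: HT => _ _ _ leaf; rewrite /last_child; move/eqP; rewrite leaf.
by case: (children T v) => // x s _ /=; apply: mem_last.
Qed.

End DagInduction.

Section EarliestFinish.
Local Open Scope ring_scope.
Variables (R : realType) (N : finType) (A : {set N}) (prec : rel N).
Variable d : N -> R.

Definition down (a : N) : {set N} := [set b in A | (b == a) || prec b a].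

(* Earliest finish time of a: the largest duration of a chain below a. *)
Definition etime (a : N) : R :=
  \big[Num.max/0]_(C : {set N} | is_chain A prec C && (C \subset down a))
     \sum_(b in C) d b.

Lemma etime_ge0 a : 0 <= etime a.
Proof. exact: bigmax_ge_id. Qed.

Lemma chain1 a : a \in A -> is_chain A prec [set a].
Proof.
move=> aA; rewrite /is_chain sub1set aA /=.
by apply/forall_inP => x /set1P ->; apply/forall_inP => y /set1P ->; rewrite eqxx.
Qed.

Lemma etime_dur a : a \in A -> d a <= etime a.
Proof.
move=> aA; have <- : \sum_(b in [set a]) d b = d a by rewrite big_set1.
apply: le_bigmax_cond.
by rewrite chain1 // sub1set inE aA eqxx.
Qed.

(* Every chain is contained in a maximal one (take a largest superchain). *)
Lemma extend_chain C :
  is_chain A prec C -> exists2 D, is_max_chain A prec D & C \subset D.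
Proof.
move=> HC; have C0 : is_chain A prec C && (C \subset C) by rewrite HC subxx.
case: (@arg_maxnP _ C (fun D => is_chain A prec D && (C \subset D))
  (fun D => #|D|) C0) => D /andP[HD CD] Dmax.
exists D => //; rewrite /is_max_chain HD /=.
apply/forallP => D'; apply/implyP => DD'; apply/negP => HD'.
have /Dmax : is_chain A prec D' && (C \subset D').
  by rewrite HD' (subset_trans CD (proper_sub DD')).
by rewrite /= leqNgt proper_card.
Qed.

Variable T : dat N.
Hypothesis HO : attack T A prec.

(* A chain below a, extended by a' above a, is a chain below a'. *)
Lemma etime_prec a a' :
  a \in A -> a' \in A -> prec a a' -> etime a <= etime a' - d a'.
Proof.
case: HO => _ _ irr trans aA a'A aa'.
apply: bigmax_le => [|C /andP[/andP[CA Cch] Cdown]].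
  by rewrite subr_ge0 etime_dur.
have below y : y \in C -> prec y a'.
  move=> /(subsetP Cdown); rewrite inE => /andP[yA /orP[/eqP -> //|ya]].
  exact: trans ya aa'.
have a'C : a' \notin C by apply/negP => /below; apply/negP/irr.
rewrite lerBrDr addrC -big_setU1 //=; apply: le_bigmax_cond.
apply/andP; split; last first.
  apply/subsetP => y /setU1P[->|yC]; first by rewrite inE a'A eqxx.
  by rewrite inE (subsetP CA) ?below ?orbT.
rewrite /is_chain subUset sub1set a'A CA /=.
apply/forall_inP => x /setU1P Hx; apply/forall_inP => y /setU1P Hy.
case: Hx => [->|xC]; case: Hy => [->|yC].
- by rewrite eqxx.
- by rewrite (below y yC) orbT.
- by rewrite (below x xC) orbT.
- by move/forall_inP: Cch => /(_ x xC) /forall_inP ->.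
Qed.

(* Durations are nonnegative, so etime is dominated by t(O, d). *)
Lemma etime_le_attack_time (Hd : forall a, ntyp T a = BAS -> 0 <= d a) a :
  etime a <= attack_time A prec d.
Proof.
case: HO => bas _ _ _; apply: bigmax_le => [|C /andP[HC _]].
  exact: bigmax_ge_id.
case: (extend_chain HC) => D HD CD.
apply: le_trans (le_bigmax_cond _ _ HD).
rewrite [X in _ <= X](big_setID C) /= (setIidPr CD) lerDl.
apply: sumr_ge0 => b /setDP[bD _]; apply/Hd/bas.
by case/andP: HD => /andP[/subsetP DA _] _; apply: DA.
Qed.

End EarliestFinish.

Section ExactFixpoint.
Local Open Scope ereal_scope.
Variables (R : realType) (N : finType) (T : dat N) (d : N -> R).
Hypothesis HT : wf_dat T.
Variable base : N -> \bar R.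

Definition exact_step (h : N -> \bar R) (v : N) : \bar R :=
  match ntyp T v with
  | BAS => base v
  | OR => \big[Order.min/+oo]_(c <- children T v) h c
  | AND => \big[Order.max/-oo]_(c <- children T v) h c
  | SAND => if `[< sand_prem_b T h v >] || `[< sand_prem_c T d h v >]
            then +oo else h (last_child T v)
  end.

Lemma exact_step_local h1 h2 v :
  (forall c, c \in children T v -> h1 c = h2 c) ->
  (forall a, ntyp T a = BAS -> h1 a = h2 a) ->
  exact_step h1 v = exact_step h2 v.
Proof.
move=> Hc Hb; rewrite /exact_step; case Ev: (ntyp T v) => //.
- exact: eq_big_seq.
- exact: eq_big_seq.
have Zbas i a a' : Zpair T v i a a' -> h1 a = h2 a /\ h1 a' = h2 a'.
  by case/andP; rewrite !inE => /andP[_ /eqP/Hb ->] /andP[_ /eqP/Hb ->].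
have -> : `[< sand_prem_b T h1 v >] = `[< sand_prem_b T h2 v >].
  by apply/asboolP/asboolP => -[c cv hc]; exists c; rewrite // ?Hc // -Hc.
have -> : `[< sand_prem_c T d h1 v >] = `[< sand_prem_c T d h2 v >].
  apply/asboolP/asboolP => -[i [a [a' [Hi Hz H1 H2]]]];
    exists i, a, a'; case: (Zbas _ _ _ Hz) => E E'.
    by rewrite -E -E'.
  by rewrite E E'.
by rewrite Hc // last_child_in // Ev.
Qed.

Definition fsol : N -> \bar R := iter #|N| exact_step base.

Lemma iter_bas k a : ntyp T a = BAS -> iter k exact_step base a = base a.
Proof. by case: k => //= k Ba; rewrite /exact_step Ba. Qed.

Lemma iter_stable k v : (ndesc T v <= k)%N ->
  iter k exact_step base v = iter k.+1 exact_step base v.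
Proof.
elim: k v => [|k IH] v vk; first by move: vk; rewrite leqNgt ndesc_pos.
apply: (@exact_step_local (iter k exact_step base) (iter k.+1 exact_step base))
  => [c /(ndesc_child HT) cv|a Ba].
  by apply: IH; rewrite -ltnS (leq_trans cv).
by rewrite !iter_bas.
Qed.

Lemma fsol_fix v : fsol v = exact_step fsol v.
Proof. by rewrite /fsol iter_stable // ndesc_le_card. Qed.

Lemma fsol_bas a : ntyp T a = BAS -> fsol a = base a.
Proof. exact: iter_bas. Qed.

Hypothesis base_ge0 : forall a, ntyp T a = BAS -> 0 <= base a.
Hypothesis base_dur : forall a, ntyp T a = BAS -> (d a)%:E <= base a.

Lemma fsol_ge0 v : 0 <= fsol v.
Proof.
elim/(dat_ind HT): v => v IH; rewrite fsol_fix /exact_step.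
case Ev: (ntyp T v); first exact: base_ge0.
- by rewrite big_seq; apply: le_bigmin => //; exact: leey.
- have lc : last_child T v \in children T v by apply: last_child_in; rewrite ?Ev.
  exact: bigmax_sup_seq _ _ _ _ _ lc isT (IH _ lc).
- by case: ifP => _; [exact: leey | apply/IH/last_child_in; rewrite ?Ev].
Qed.

Lemma fsol_time_assignment : time_assignment T d fsol.
Proof.
split; first exact: fsol_ge0.
- by move=> a Ba; rewrite fsol_bas ?base_dur.
- by move=> v Ev; rewrite (fsol_fix v) /exact_step Ev.
- by move=> v Ev; rewrite (fsol_fix v) /exact_step Ev.
move=> v Ev; rewrite [fsol v]fsol_fix /exact_step Ev; split.
- by case: ifP => _; [exact: leey | exact: lexx].
- by move=> /asboolT ->.
- by move=> /asboolT ->; rewrite orbT.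
Qed.

Lemma fsol_exact : exact_ta T d fsol.
Proof.
split=> v Ev; rewrite (fsol_fix v) /exact_step Ev //.
by move=> /asboolF -> /asboolF ->.
Qed.

End ExactFixpoint.

Section AttackBound.
Local Open Scope ereal_scope.
Variables (R : realType) (N : finType) (T : dat N) (d : N -> R).
Hypothesis HT : wf_dat T.
Hypothesis Hd : forall a, ntyp T a = BAS -> (0 <= d a)%R.
Variables (A : {set N}) (prec : rel N).
Hypothesis HO : attack T A prec.

Definition chain_base (a : N) : \bar R :=
  if a \in A then (etime A prec d a)%:E else +oo.

Lemma chain_base_ge0 a : 0 <= chain_base a.
Proof. by rewrite /chain_base; case: ifP; rewrite ?lee_fin ?etime_ge0 ?leey. Qed.

Lemma chain_base_dur a : (d a)%:E <= chain_base a.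
Proof. by rewrite /chain_base; case: ifP => aA; rewrite ?lee_fin ?etime_dur ?leey. Qed.

Local Notation f := (fsol T d chain_base).

Lemma sand_ok_no_prem_c v : sand_ok T A prec v -> ~ sand_prem_c T d f v.
Proof.
move=> ok [i [a [a' [Hi Hz lt_a fin_a]]]].
case/andP: (Hz) => aB a'B.
move: (aB) (a'B); rewrite !inE => /andP[_ /eqP Ba] /andP[_ /eqP Ba'].
rewrite !fsol_bas // /chain_base in lt_a fin_a.
case aA: (a \in A) in lt_a fin_a; last by rewrite ltxx in fin_a.
case a'A: (a' \in A) in lt_a => //.
move: lt_a; rewrite -EFinB lte_fin ltNge.
by rewrite (etime_prec d HO aA a'A (ok i Hi a a' aA a'A aB a'B)).
Qed.

Lemma reaches_bound v :
  reaches T A prec v -> f v <= (attack_time A prec d)%:E.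
Proof.
elim=> {v} [v Ev vA|v c Ev cv _ IH|v Ev _ IH|v Ev _ IH ok];
  rewrite (fsol_fix d HT) /exact_step Ev.
- by rewrite /chain_base vA lee_fin (etime_le_attack_time HO Hd).
- exact: bigmin_inf_seq _ _ _ _ _ cv isT IH.
- by rewrite big_seq; apply: bigmax_le => //; exact: leNye.
have no_b : ~ sand_prem_b T f v by case=> c /IH + fc; rewrite fc.
rewrite (asboolF no_b) (asboolF (sand_ok_no_prem_c ok)) /=.
by apply/IH/last_child_in; rewrite ?Ev.
Qed.

End AttackBound.

Theorem mainTheorem7 (R : realType) (N : finType) (T : dat N)
  (HT : wf_dat T) (d : N -> R)
  (Hd : forall a, ntyp T a = BAS -> (0 <= d a)%R)
  (A : {set N}) (prec : rel N)
  (HO : attack T A prec) (Hs : successful T A prec) :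
  exists f : N -> \bar R,
    [/\ time_assignment T d f, exact_ta T d f
      & (f (droot T) <= (attack_time A prec d)%:E)%E].
Proof.
have base_ge0 a (_ : ntyp T a = BAS) := chain_base_ge0 d A prec a.
have base_dur a (_ : ntyp T a = BAS) := chain_base_dur d A prec a.
exists (fsol T d (chain_base d A prec)); split.
- exact: fsol_time_assignment base_ge0 base_dur.
- exact: fsol_exact.
- exact: (reaches_bound HT Hd HO Hs).
Qed.
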